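(* Let $\Phi=\forall u_1\ldots\forall u_n\exists e_1(D_1)\ldots\exists e_m(D_m).\varphi$ be a DQBF. In any run of Algorithm 1 (as described in the context) on $\Phi$, for each clause $C$ added to the clause set $\mathcal{C}$ in Phase 2, some clause $C'\subseteq C$ (reading each arbiter variable $e^\sigma$ as the annotated variable $e^\sigma$) is derivable from $\Phi$ in the $\forall$Exp+Res calculus.
   Context: For a set $V$ of variables, $[V]$ is the set of assignments $V\to\{\textsc{true},\textsc{false}\}$; assignments are identified with terms of the literals they make true, $\neg\sigma$ is the clause of the negations of these literals, and $\sigma|_W$ denotes restriction. A DQBF is $\Phi=\forall u_1\ldots\forall u_n\exists e_1(D_1)\ldots\exists e_m(D_m).\varphi$ with pairwise distinct variables, $U=\{u_i\}$, $E=\{e_j\}$, dependency sets $D(e_j)=D_j\subseteq U$, $\varphi$ a CNF over $U\cup E$. A definition of a variable $x$ by a set $X$ in a formula $\chi$ is a formula $\psi$ with $\mathit{var}(\psi)\subseteq X$ such that every satisfying assignment $\lambda$ of $\chi$ has $\lambda(x)=\psi[\lambda]$. Arbiter variables $e^\sigma$ ($e\in E$, $\sigma\in[D(e)]$) are fresh variables. Algorithm 1. Phase 1: set $A=\emptyset$, $\varphi_A=\emptyset$, $\psi_{\mathit{Def}}=$ empty conjunction. For $i=1,\dots,m$: while $e_i$ has no definition by $A\cup D_i$ in $\varphi\wedge\varphi_A$, choose $\xi\in[D_i\cup A]$ such that both $\varphi\wedge\varphi_A\wedge\xi\wedge e_i$ and $\varphi\wedge\varphi_A\wedge\xi\wedge\neg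 e_i$ are satisfiable, let $\sigma=\xi|_{D_i}$, add $e_i^\sigma$ to $A$ and the clauses $(e_i^\sigma\vee\neg\sigma\vee\neg e_i)$, $(\neg e_i^\sigma\vee\neg\sigma\vee e_i)$ to $\varphi_A$. Then choose a definition $\psi^i$ of $e_i$ by $A\cup D_i$ in $\varphi\wedge\varphi_A$ and conjoin $(e_i\leftrightarrow\psi^i)$ to $\psi_{\mathit{Def}}$. Phase 2: let $\tau\in[A]$ set all arbiter variables true, $\mathcal{C}=\emptyset$. Repeat: if $\neg\varphi\wedge\psi_{\mathit{Def}}\wedge\tau$ is unsatisfiable, return TRUE; otherwise choose a satisfying assignment $\sigma$ of it, choose a subset $\rho$ of the literals of $\tau\wedge\sigma|_U$ with $\varphi\wedge\varphi_A\wedge\rho$ unsatisfiable, add the clause $\neg(\rho|_A)$ to $\mathcal{C}$; if $\mathcal{C}$ is satisfiable, let $\tau\in[A]$ satisfy $\mathcal{C}$ and repeat, else return FALSE. The $\forall$Exp+Res calculus for $\Phi$ works on clauses over annotated variables $x^\tau$ ($x\in E$, $\tau\in[D(x)]$; different annotations give different variables; $\ell^\tau$ is the literal on $\mathit{var}(\ell)^\tau$ with the polarity of $\ell$) with rules: (axiom) for any $C\in\varphi$ and any $\sigma\in[U]$ falsifying every universal literal of $C$, derive $\{\ell^{\sigma|_{D(\mathit{var}(\ell))}}\mid\ell\in C,\ \mathit{var}(\ell)\in E\}$; (resolution) from $C_1\cup\{x^\tau\}$ and $C_2\cup\{\neg x^\tau\}$ derive $C_1\cup C_2$. A clause is derivable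 if it ends a finite sequence of clauses each obtained by a rule from earlier ones. *)

From mathcomp Require Import all_boot.
Set Implicit Arguments. Unset Strict Implicit. Unset Printing Implicit Defensive.

Inductive formula (V : Type) : Type :=
| FVar of V
| FConst of bool
| FNot of formula V
| FAnd of formula V & formula V
| FOr of formula V & formula V.

Fixpoint feval (V : Type) (l : V -> bool) (f : formula V) : bool :=
  match f with
  | FVar v => l v
  | FConst b => b
  | FNot g => ~~ feval l g
  | FAnd g h => feval l g && feval l h
  | FOr g h => feval l g || feval l h
  end.

Fixpoint fvars_in (V : Type) (X : V -> bool) (f : formula V) : Prop :=
  match f with
  | FVar v => X v
  | FConst _ => True
  | FNot g => fvars_in X g
  | FAnd g h | FOr g h => fvars_in X g /\ fvars_in X h
  end.

Section DQBF.
(* universal variables u_1..u_n are 'I_n, existential e_1..e_m are 'I_m *)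
Variables (n m : nat).

(* An arbiter variable e_j^sigma / annotated variable e_j^sigma, sigma ∈ [D_j],
   is represented as (j, T) where T ⊆ D_j is the set of universals sigma sets true. *)
Definition avar := ('I_m * {set 'I_n})%type.
Definition var := ('I_n + 'I_m + avar)%type.
Definition uvar (u : 'I_n) : var := inl (inl u).
Definition evar (j : 'I_m) : var := inl (inr j).
Definition arbvar (a : avar) : var := inr a.
Definition is_uvar (v : var) : bool := if v is inl (inl _) then true else false.
Definition is_arb (v : var) : bool := if v is inr _ then true else false.

(* literal (v, b): v if b = true, ¬v if b = false *)
Definition lit := (var * bool)%type.
Definition clause := seq lit.
Definition cnf := seq clause.
Definition asg := var -> bool.
Definition sat_lit (l : asg) (x : lit) : bool := l x.1 == x.2.
Definition sat_clause (l : asg) (C : clause) : bool := has (sat_lit l) C.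
Definition sat_cnf (l : asg) (F : cnf) : bool := all (sat_clause l) F.

(* The matrix of a DQBF is a CNF over U ∪ E (arbiter variables are fresh). *)
Definition matrix_wf (phi : cnf) : Prop :=
  forall C x, C \in phi -> x \in C -> ~~ is_arb x.1.

Definition agree_on (X : var -> bool) (l l' : asg) : Prop :=
  forall v, X v -> l v = l' v.

Definition is_definition (x : var) (X : var -> bool) (chi : cnf)
  (psi : formula var) : Prop :=
  fvars_in X psi /\ forall l, sat_cnf l chi -> l x = feval l psi.

Variables (D : 'I_m -> {set 'I_n}) (phi : cnf).

Definition neg_term (j : 'I_m) (T : {set 'I_n}) : clause :=
  [seq (uvar u, u \notin T) | u <- enum (D j)].

Definition arb_clauses (a : avar) : cnf :=
  [:: [:: (arbvar a, true), (evar a.1, false) & neg_term a.1 a.2];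
      [:: (arbvar a, false), (evar a.1, true) & neg_term a.1 a.2]].

Definition phiA (A : seq avar) : cnf := flatten (map arb_clauses A).

Definition inDA (i : 'I_m) (A : seq avar) (v : var) : bool :=
  match v with
  | inl (inl u) => u \in D i
  | inl (inr _) => false
  | inr a => a \in A
  end.

Definition inA (A : seq avar) (v : var) : bool :=
  if v is inr a then a \in A else false.

(* Phase 1: phase1 k A Defs means that after processing e_1..e_k (0-based: the
   existentials with index < k) the arbiter set is A and the chosen definitions
   (conjuncts e_i <-> psi^i of psi_Def) are Defs. *)
Inductive phase1 : nat -> seq avar -> seq ('I_m * formula var) -> Prop :=
| P1_start : phase1 0 [::] [::]
| P1_arb k A Ds (i : 'I_m) (xi : asg) :
    phase1 k A Ds -> val i = k ->
    ~ (exists psi, is_definition (evar i) (inDA i A) (phi ++ phiA A) psi) ->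
    (exists l, [/\ sat_cnf l (phi ++ phiA A), agree_on (inDA i A) l xi
                 & l (evar i) = true]) ->
    (exists l, [/\ sat_cnf l (phi ++ phiA A), agree_on (inDA i A) l xi
                 & l (evar i) = false]) ->
    phase1 k (rcons A (i, [set u in D i | xi (uvar u)])) Ds
| P1_def k A Ds (i : 'I_m) (psi : formula var) :
    phase1 k A Ds -> val i = k ->
    is_definition (evar i) (inDA i A) (phi ++ phiA A) psi ->
    phase1 k.+1 A (rcons Ds (i, psi)).

Definition sat_defs (Ds : seq ('I_m * formula var)) (l : asg) : Prop :=
  all (fun d => l (evar d.1) == feval l d.2) Ds.

Definition rho_ok (A : seq avar) (tau sigma : asg) (rho : seq lit) : Prop :=
  forall x, x \in rho ->
    (inA A x.1 && (x.2 == tau x.1)) || (is_uvar x.1 && (x.2 == sigma x.1)).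

Definition neg_arb_part (rho : seq lit) : clause :=
  [seq (x.1, ~~ x.2) | x <- rho & is_arb x.1].

(* the choices made in one iteration of Phase 2 leading to a new clause *)
Definition p2_choice (A : seq avar) (Ds : seq ('I_m * formula var))
  (tau sigma : asg) (rho : seq lit) : Prop :=
  [/\ ~~ sat_cnf sigma phi, sat_defs Ds sigma, agree_on (inA A) sigma tau,
      rho_ok A tau sigma rho &
      ~ (exists l, sat_cnf l (phi ++ phiA A) && all (sat_lit l) rho)].

Inductive phase2 (A : seq avar) (Ds : seq ('I_m * formula var)) :
  asg -> seq clause -> Prop :=
| P2_start : phase2 A Ds (fun _ => true) [::]
| P2_step tau Cs sigma rho tau' :
    phase2 A Ds tau Cs -> p2_choice A Ds tau sigma rho ->
    sat_cnf tau' (rcons Cs (neg_arb_part rho)) ->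
    phase2 A Ds tau' (rcons Cs (neg_arb_part rho)).

Definition added_clause (C : clause) : Prop :=
  exists A Ds tau Cs sigma rho,
    [/\ phase1 m A Ds, phase2 A Ds tau Cs, p2_choice A Ds tau sigma rho
      & C = neg_arb_part rho].

Definition alit := (avar * bool)%type.
Definition aclause := {set alit}.

(* axiom instance of C under sigma ∈ [U] given by the set S of true universals *)
Definition axiom_clause (C : clause) (S : {set 'I_n}) : aclause :=
  [set x : alit | has (fun y : lit =>
     match y.1 with
     | inl (inr j) => (x.1 == (j, S :&: D j)) && (x.2 == y.2)
     | _ => false
     end) C].

Inductive derivable : aclause -> Prop :=
| Der_axiom (C : clause) (S : {set 'I_n}) :
    C \in phi ->
    (forall u b, (uvar u, b) \in C -> (u \in S) != b) ->
    derivable (axiom_clause C S)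
| Der_res (C1 C2 : aclause) (x : avar) :
    derivable (C1 :|: [set (x, true)]) ->
    derivable (C2 :|: [set (x, false)]) ->
    derivable (C1 :|: C2).

End DQBF.

From Pilot Require Import Defs.
From mathcomp Require Import all_boot.
Set Implicit Arguments. Unset Strict Implicit. Unset Printing Implicit Defensive.

(* Let rho be the unsatisfiable set of literals behind a Phase-2 clause and tau
   the values it gives to the arbiter variables X occurring in it.  Together
   with sigma|U, every assignment alpha of the annotated variables that agrees
   with tau on X induces an assignment (e_j := alpha(e_j^(sigma|D_j))) that
   satisfies rho and all arbiter clauses, hence falsifies some clause of phi,
   whose axiom instance under sigma is then falsified by alpha.  By the
   semantic-tree completeness of resolution, some derivable clause over X is
   falsified by tau itself; its literals are negations of arbiter literals of
   rho, i.e. it is contained in the added clause. *)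

Lemma setD1_notin (T : finType) (p : T) (C : {set T}) : p \notin C -> C :\ p = C.
Proof. by move=> pC; apply/setDidPl; rewrite disjoint_sym disjoints1. Qed.

Section ResolutionCompleteness.
Variables (V : finType) (derivable : {set V * bool} -> Prop).
Hypothesis derivable_res : forall (C1 C2 : {set V * bool}) x,
  derivable (C1 :|: [set (x, true)]) -> derivable (C2 :|: [set (x, false)]) ->
  derivable (C1 :|: C2).

Definition falsifies (alpha : V -> bool) (C : {set V * bool}) : Prop :=
  forall x, x \in C -> alpha x.1 != x.2.

Definition clause_over (X : {set V}) (C : {set V * bool}) : Prop :=
  forall x, x \in C -> x.1 \in X.

Lemma falsifies_update_setD1 (X : {set V}) beta a b C :
  a \notin X -> clause_over (a |: X) C -> falsifies [eta beta with a |-> b] C ->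
  clause_over X (C :\ (a, ~~ b)) /\ falsifies beta (C :\ (a, ~~ b)).
Proof.
rewrite /clause_over /falsifies /= => aX CX Cf.
suff vX v c : (v, c) \in C :\ (a, ~~ b) -> v \in X.
  split=> [[v c] /vX //|[v c] vcC].
  have va : v != a by apply: contraTneq (vX _ _ vcC) => ->.
  by case/setD1P: vcC => _ /Cf; rewrite /= (negbTE va).
case/setD1P=> vc_ab /[dup] /Cf + /CX /setU1P[/= va|//]; rewrite /= va eqxx.
by move: vc_ab; rewrite va; case: (b); case: c; rewrite //= eqxx.
Qed.

Lemma resolution_complete (X : {set V}) (beta : V -> bool) :
  (forall alpha, {in X, alpha =1 beta} -> exists2 C, derivable C & falsifies alpha C) ->
  exists2 C, derivable C & clause_over X C /\ falsifies beta C.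
Proof.
have [k] := ubnP #|~: X|; elim: k X beta => // k IH X beta ltXk refute.
have [XT|[a aX]] := set_0Vmem (~: X).
  have [C dC Cf] := refute beta (fun _ _ => erefl).
  by exists C => //; split=> // x _; rewrite -[X]setCK XT setC0 inE.
rewrite inE in aX.
have ltaXk : #|~: (a |: X)| < k.
  rewrite -ltnS (leq_trans _ ltXk) // ltnS; apply: proper_card.
  by rewrite setCU setIC -setDE properD1 // inE.
have sub b : exists2 C, derivable C &
    clause_over X (C :\ (a, ~~ b)) /\ falsifies beta (C :\ (a, ~~ b)).
  have refute_ab alpha : {in a |: X, alpha =1 [eta beta with a |-> b]} ->
      exists2 C, derivable C & falsifies alpha C.
    move=> alpha_ab; apply: refute => v vX.
    have va : v != a by apply: contraTneq vX => ->.
    by rewrite alpha_ab ?inE ?vX ?orbT //= (negbTE va).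
  have [C dC [CX Cf]] := IH _ _ ltaXk refute_ab.
  by exists C => //; apply: falsifies_update_setD1.
have [C1 dC1 [C1X C1f]] := sub true; have [C2 dC2 [C2X C2f]] := sub false.
have [p1|np1] := boolP ((a, false) \in C1); last first.
  by exists C1 => //; rewrite -(setD1_notin np1).
have [p2|np2] := boolP ((a, true) \in C2); last first.
  by exists C2 => //; rewrite -(setD1_notin np2).
exists ((C2 :\ (a, true)) :|: (C1 :\ (a, false))).
  by apply: derivable_res (a) _ _; rewrite setUC setD1K.
by split=> x /setUP[]; [apply: C2X | apply: C1X | apply: C2f | apply: C1f].
Qed.
End ResolutionCompleteness.

Lemma phase1_annot_sub n m (D : 'I_m -> {set 'I_n}) (phi : cnf n m) k A Ds :
  phase1 D phi k A Ds -> forall a, a \in A -> a.2 \subset D a.1.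
Proof.
elim=> // {}k {}A {}Ds i xi _ IH _ _ _ _ a.
rewrite mem_rcons inE => /predU1P[-> | /IH //].
by apply/subsetP => u; rewrite inE => /andP[].
Qed.

Section Expansion.
Variables (n m : nat) (D : 'I_m -> {set 'I_n}) (phi : cnf n m).
Variables (sigma : asg n m) (alpha : avar n m -> bool).

Definition true_universals : {set 'I_n} := [set u | sigma (uvar m u)].

Definition expansion_asg : asg n m := fun v =>
  match v with
  | inl (inl _) => sigma v
  | inl (inr j) => alpha (j, true_universals :&: D j)
  | inr a => alpha a
  end.

Lemma expansion_neg_term j (T : {set 'I_n}) : T \subset D j ->
  ~~ sat_clause expansion_asg (neg_term D j T) -> true_universals :&: D j = T.
Proof.
move=> TD /hasPn neg_false; apply/setP => u; rewrite !inE.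
have [uD|uD] := boolP (u \in D j); last first.
  by rewrite andbF; apply/esym/negbTE; apply: contra uD; apply: (subsetP TD).
have := neg_false (uvar m u, u \notin T) (map_f _ _); rewrite mem_enum => /(_ uD).
by rewrite /sat_lit /= andbT; case: (sigma _); case: (u \in T).
Qed.

Lemma expansion_sat_phiA (A : seq (avar n m)) :
  (forall a, a \in A -> a.2 \subset D a.1) -> sat_cnf expansion_asg (phiA D A).
Proof.
move=> annot_sub; apply/allP => c /flattenP[_ /mapP[[j T] /annot_sub /= TD ->]].
rewrite !inE /sat_clause => /orP[]/eqP-> /=;
  case: (boolP (has _ _)) => [|/(expansion_neg_term TD) ST]; rewrite ?orbT //.
all: by rewrite /sat_lit /= ST; case: (alpha _).
Qed.

Lemma expansion_falsified_axiom Cl : Cl \in phi ->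
  ~~ sat_clause expansion_asg Cl ->
  derivable D phi (axiom_clause D Cl true_universals) /\
  falsifies alpha (axiom_clause D Cl true_universals).
Proof.
move=> Cl_phi Cl_false; have lit_false := hasPn Cl_false.
split=> [|x]; first by apply: Der_axiom => // u b /lit_false; rewrite /sat_lit /= inE.
rewrite inE => /hasP[[[[//|j]|//] c] jcCl /= /andP[/eqP -> /eqP ->]].
exact: lit_false jcCl.
Qed.

Definition arb_support (tau : asg n m) (rho : seq (lit n m)) : {set avar n m} :=
  [set a | (arbvar a, tau (arbvar a)) \in rho].

Lemma expansion_sat_rho A tau rho : rho_ok A tau sigma rho ->
  {in arb_support tau rho, alpha =1 tau \o @arbvar n m} ->
  all (sat_lit expansion_asg) rho.
Proof.
move=> rok alpha_tau; apply/allP => -[v c] vc.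
case/orP: (rok _ vc) => /andP[]; case: v vc => [[u|//]|a] //= vc _ /eqP c_tau;
  rewrite c_tau /sat_lit in vc *.
  by rewrite /= alpha_tau // inE.
by rewrite /sat_lit.
Qed.

End Expansion.

Theorem proposition1 (n m : nat) (D : 'I_m -> {set 'I_n}) (phi : cnf n m) :
  matrix_wf phi ->
  forall C : clause n m, added_clause D phi C ->
  exists C' : aclause n m,
    derivable D phi C' /\
    (forall (a : avar n m) (b : bool), (a, b) \in C' -> (arbvar a, b) \in C).
Proof.
(* Arbiter literals in phi would be dropped by axiom instances anyway. *)
move=> _ C [A [Ds [tau [Cs [sigma [rho [P1 _ [_ _ _ rok unsat] ->]]]]]]].
have [C' dC' [C'X C'f]] : exists2 C', derivable D phi C' &
    clause_over (arb_support tau rho) C' /\ falsifies (tau \o @arbvar n m) C'.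
  apply: resolution_complete => [C1 C2 x|alpha alpha_tau]; first exact: Der_res.
  have rho_sat := expansion_sat_rho D rok alpha_tau.
  have phiA_sat := expansion_sat_phiA sigma alpha (phase1_annot_sub P1).
  have [Cl Cl_phi Cl_false] : exists2 Cl, Cl \in phi &
      ~~ sat_clause (expansion_asg D sigma alpha) Cl.
    apply/allPn/negP => phi_sat; apply: unsat.
    exists (expansion_asg D sigma alpha); rewrite /sat_cnf in phiA_sat *.
    by rewrite all_cat phi_sat phiA_sat rho_sat.
  have [] := expansion_falsified_axiom Cl_phi Cl_false.
  by exists (axiom_clause D Cl (true_universals sigma)).
exists C'; split=> // a b /[dup] /C'X + /C'f; rewrite inE /= => arb_rho b_tau.
apply/mapP; exists (arbvar a, tau (arbvar a)); first by rewrite mem_filter.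
by move: b_tau; case: b; case: (tau _).
Qed.
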